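(* Let $\mathsf A$ be an MDCS instance and let $\mathsf A'=\mathsf A/E_e$ be obtained by contracting encoder $E_e$, with encoder set $\mathcal E'=\mathcal E\setminus\{E_e\}$. Writing $\mathrm{Proj}'$ for projection onto the coordinates $(H(X_k))_{k\in[[K]]}$ and $(R_i)_{i\in\mathcal E'}$, $$\mathcal R(\mathsf A')=\mathrm{Proj}'\,\mathcal R(\mathsf A),\quad \mathcal R_q(\mathsf A')=\mathrm{Proj}'\,\mathcal R_q(\mathsf A),\quad \mathcal R_{s,q}(\mathsf A')\supseteq\mathrm{Proj}'\,\mathcal R_{s,q}(\mathsf A),\quad \mathcal R_{sp}(\mathsf A')=\mathrm{Proj}'\,\mathcal R_{sp}(\mathsf A).$$
   Context: An MDCS instance $\mathsf{A}=(\mathbf X_{[[K]]},\mathcal E,\mathcal D,\mathbf L,\mathcal G)$ consists of $K$ mutually independent sources $X_1,\dots,X_K$, a finite set $\mathcal E$ of encoders $E_e$ (each has access to all sources and outputs a message $U_e$), a finite set $\mathcal D$ of decoders $D_d$, a level $\mathrm{Lev}(D_d)\in\{1,\dots,K\}$ for each decoder, and an edge set $\mathcal G\subseteq\mathcal E\times\mathcal D$; $\mathrm{Fan}(D_d)=\{E_e:(E_e,D_d)\in\mathcal G\}$, $\mathrm{Fan}(E_e)=\{D_d:(E_e,D_d)\in\mathcal G\}$; $D_d$ must recover $X_1,\dots,X_{\mathrm{Lev}(D_d)}$ from $U_e$, $E_e\in\mathrm{Fan}(D_d)$. Encoder contraction $\mathsf A/E_e$: $\mathcal E'=\mathcal E\setminus\{E_e\}$;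 $\mathcal D'=\mathcal D\setminus\mathrm{Fan}(E_e)$; levels of surviving decoders unchanged; edges restricted to $\mathcal E'\times\mathcal D'$. Rate regions: let $N=K+|\mathcal E|$ with random variables $Y_1,\dots,Y_K,U_e$ ($e\in\mathcal E$); $\mathbf h\in\mathbb R^{2^N-1}$ indexed by nonempty subsets of them; $h_{\mathcal A|\mathcal B}=h_{\mathcal A\cup\mathcal B}-h_{\mathcal B}$. $\mathcal L_1=\{\mathbf h\ge0:h_{Y_1\cdots Y_K}=\sum_kh_{Y_k}\}$, $\mathcal L_2=\{\mathbf h\ge0:h_{U_e|Y_1\cdots Y_K}=0\ \forall e\}$, $\mathcal L_5=\{\mathbf h\ge0:h_{Y_1\cdots Y_{\mathrm{Lev}(D_d)}|(U_e)_{E_e\in\mathrm{Fan}(D_d)}}=0\ \forall d\}$, $\mathcal L_{125}=\mathcal L_1\cap\mathcal L_2\cap\mathcal L_5$, $\mathcal L_4''=\{(\mathbf h,\mathbf R)\in\mathbb R^{2^N-1}_{\ge0}\times\mathbb R^{|\mathcal E|}_{\ge0}:R_e\ge h_{U_e}\ \forall e\}$. All regions live in coordinates $((H(X_k))_k,(R_e)_e)$, where $H(X_k)$ denotes the coordinate $h_{Y_k}$; $\mathrm{Proj}$ is coordinate projection onto these. $\Gamma^*_N$ is the set of entropic vectors, $\overline{\mathrm{con}}$ the closure of the conic hull. $\Gamma_N^q$: conic hull of rank functions $\mathcal A\mapsto\mathrm{rank}(\mathbb A_{:,\mathcal A})$ of matrices $\mathbb A$ over $\mathbb F_q$ with $N$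 columns. $\Gamma^q_{N,\infty}$: conic hull of vectors $\mathcal A\mapsto\dim\sum_{i\in\mathcal A}V_i$ for subspaces $V_1,\dots,V_N$ of a finite-dimensional $\mathbb F_q$-vector space. Then $\mathcal R(\mathsf A)=\mathrm{Proj}(\overline{\mathrm{con}}(\Gamma^*_N\cap\mathcal L_1\cap\mathcal L_2)\cap\mathcal L_5\cap\mathcal L_4'')$ (the rate region: achievable source-entropy/encoder-rate tuples); $\mathcal R_q(\mathsf A)=\mathrm{Proj}(\Gamma^q_{N,\infty}\cap\mathcal L_{125}\cap\mathcal L_4'')$ (achievable by vector $\mathbb F_q$-linear codes); $\mathcal R_{s,q}(\mathsf A)=\mathrm{Proj}(\Gamma^q_N\cap\mathcal L_{125}\cap\mathcal L_4'')$ (achievable by scalar $\mathbb F_q$-linear codes); $\mathcal R_{sp}(\mathsf A)=\mathrm{Proj}_{(R_e),(H(X_k))}\{(R_e,H(X_k),R_e^{X_k})_{e,k}\ge0: R_e=\sum_{i=1}^KR_e^{X_i}\ \forall e;\ \sum_{e:E_e\in\mathrm{Fan}(D_d)}R_e^{X_i}\ge H(X_i)\ \forall d\in\mathcal D,\ i\le\mathrm{Lev}(D_d)\}$ (superposition coding region). *)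

From HB Require Import structures.
From mathcomp Require Import all_boot all_order all_algebra.
From Stdlib Require Import Reals.
Set Implicit Arguments. Unset Strict Implicit. Unset Printing Implicit Defensive.

(* MDCS instances.  Sources are X_1..X_K, represented 0-indexed by 'I_K;    *)
(* decoder d of level lev d must recover the sources k with k < lev d.      *)
Record mdcs := MDCS {
  K : nat;
  Enc : finType;
  Dec : finType;
  lev : Dec -> nat;
  edge : Enc -> Dec -> bool;
  lev_ok : forall d, (0 < lev d <= K)%N
}.

Definition cEnc (A : mdcs) (e : Enc A) : finType := {x : Enc A | x != e}.
Definition cDec (A : mdcs) (e : Enc A) : finType := {d : Dec A | ~~ edge e d}.
Arguments cEnc : clear implicits.
Arguments cDec : clear implicits.

Definition contract (A : mdcs) (e : Enc A) : mdcs :=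
  @MDCS (K A) (cEnc A e) (cDec A e)
        (fun d => lev (val d))
        (fun x d => edge (val x) (val d))
        (fun d => lev_ok (val d)).
Arguments contract : clear implicits.


(* Random variables Y_1..Y_K, U_e : the finite type V A; vectors h are      *)
(* functions on subsets of V A (h set0 plays no role; it is 0 for all the   *)
(* generating vectors below and hence throughout).                          *)
Definition V (A : mdcs) : finType := ('I_(K A) + Enc A)%type.
Definition vec (A : mdcs) := {set V A} -> R.

Local Open Scope R_scope.

Definition rsum (T : finType) (P : pred T) (F : T -> R) : R :=
  \big[Rplus/0]_(t | P t) F t.

(* Entropy (natural log; the base is irrelevant as all regions are cones)   *)
Definition entropy (T : finType) (P : T -> R) (W : finType) (X : W -> T -> nat)
  (S : {set W}) : R :=
  rsum predT (fun t =>
    P t * - ln (rsum (fun t' => [forall v in S, X v t' == X v t]) P)).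

Definition entropic (A : mdcs) (h : vec A) : Prop :=
  exists (T : finType) (P : T -> R) (X : V A -> T -> nat),
    (forall t, 0 <= P t) /\ rsum predT P = 1 /\
    forall S, h S = entropy P X S.

Definition con (A : mdcs) (S : vec A -> Prop) (h : vec A) : Prop :=
  exists (n : nat) (c : 'I_n -> R) (g : 'I_n -> vec A),
    (forall i, 0 <= c i) /\ (forall i, S (g i)) /\
    forall B, h B = rsum predT (fun i => c i * g i B).

Definition closure (A : mdcs) (S : vec A -> Prop) (h : vec A) : Prop :=
  forall eps, 0 < eps -> exists g, S g /\ forall B, Rabs (h B - g B) < eps.

(* Gamma^q_N : conic hull of rank functions of matrices over F with N columns
   (the column indexed by enum_rank v corresponds to the variable v). *)
Definition colrestr (F : fieldType) (W : finType) (m : nat)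
  (M : 'M[F]_(m, #|W|)) (S : {set W}) : 'M[F]_(m, #|W|) :=
  \matrix_(i, j) (if enum_val j \in S then M i j else GRing.zero).

Definition rank_vec (F : finFieldType) (A : mdcs) (h : vec A) : Prop :=
  exists (m : nat) (M : 'M[F]_(m, #|V A|)),
    forall S, h S = INR (\rank (colrestr M S)).

Definition GammaS (F : finFieldType) (A : mdcs) : vec A -> Prop :=
  con (@rank_vec F A).

(* Gamma^q_{N,infty} : conic hull of dimension functions of subspaces of a
   finite-dimensional F-space F^d (subspaces = row spaces of d x d matrices). *)
Definition subsp_vec (F : finFieldType) (A : mdcs) (h : vec A) : Prop :=
  exists (d : nat) (W : V A -> 'M[F]_d),
    forall S, h S = INR (\rank (\sum_(v in S) W v)%MS).

Definition GammaV (F : finFieldType) (A : mdcs) : vec A -> Prop :=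
  con (@subsp_vec F A).

Definition Ysrc (A : mdcs) : {set V A} := [set inl k | k : 'I_(K A)].
Definition Ylev (A : mdcs) (l : nat) : {set V A} :=
  [set inl k | k : 'I_(K A) & ltn k l].
Definition Ufan (A : mdcs) (d : Dec A) : {set V A} :=
  [set inr x | x : Enc A & edge x d].

Definition nonneg (A : mdcs) (h : vec A) : Prop := forall B, 0 <= h B.

Definition L1 (A : mdcs) (h : vec A) : Prop :=
  nonneg h /\ h (Ysrc A) = rsum predT (fun k : 'I_(K A) => h [set inl k]).
Definition L2 (A : mdcs) (h : vec A) : Prop :=
  nonneg h /\ forall x : Enc A, h (inr x |: Ysrc A) - h (Ysrc A) = 0.
Definition L5 (A : mdcs) (h : vec A) : Prop :=
  nonneg h /\ forall d : Dec A, h (Ylev A (lev d) :|: Ufan d) - h (Ufan d) = 0.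
Definition L125 (A : mdcs) (h : vec A) : Prop := L1 h /\ L2 h /\ L5 h.
Definition L4 (A : mdcs) (h : vec A) (Rt : Enc A -> R) : Prop :=
  nonneg h /\ (forall x, 0 <= Rt x) /\ (forall x, h [set inr x] <= Rt x).

(* A region is a set of points ((H(X_k))_k, (R_e)_e). *)
Definition region (A : mdcs) := ('I_(K A) -> R) -> (Enc A -> R) -> Prop.

Definition proj_region (A : mdcs) (Hset : vec A -> Prop) : region A :=
  fun Hs Rt => exists h, Hset h /\ L4 h Rt /\ forall k, Hs k = h [set inl k].

Definition Rreg (A : mdcs) : region A :=
  proj_region (fun h => closure (con (fun g => entropic g /\ L1 g /\ L2 g)) h
                        /\ L5 h).
Definition Rq (F : finFieldType) (A : mdcs) : region A :=
  proj_region (fun h => GammaV F h /\ L125 h).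
Definition Rsq (F : finFieldType) (A : mdcs) : region A :=
  proj_region (fun h => GammaS F h /\ L125 h).
Definition Rsp (A : mdcs) : region A :=
  fun Hs Rt => exists r : Enc A -> 'I_(K A) -> R,
    (forall x k, 0 <= r x k) /\ (forall k, 0 <= Hs k) /\ (forall x, 0 <= Rt x) /\
    (forall x, Rt x = rsum predT (r x)) /\
    (forall (d : Dec A) (i : 'I_(K A)), ltn i (lev d) ->
        rsum (fun x => edge x d) (fun x => r x i) >= Hs i).

Definition projc (A : mdcs) (e : Enc A) (P : region A) : region (contract A e) :=
  fun Hs Rt' => exists Rt : Enc A -> R,
    P Hs Rt /\ forall x : cEnc A e, Rt (val x) = Rt' x.
Arguments Rreg : clear implicits.
Arguments Rq : clear implicits.
Arguments Rsq : clear implicits.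
Arguments Rsp : clear implicits.
Arguments projc : clear implicits.

(* Restricting a vector h of A to the variables of A / E_e satisfies every
   constraint of A / E_e, since these are constraints of A not mentioning
   U_e; hence each region of A projects into the one of A / E_e.
   Conversely a vector h' of A / E_e lifts to A by letting U_e be the whole
   source tuple, i.e. h S := h' (S with U_e replaced by Y_1 .. Y_K): then
   U_e is a function of the sources, every decoder connected to E_e
   recovers all sources, and R_e := H(Y_1 .. Y_K) is an admissible rate.
   This lift stays entropic and vector linear, but not scalar linear (U_e
   would need K columns), which is why only one inclusion holds for R_{s,q}.
   For superposition coding E_e simply transmits every source in full. *)
From Pilot Require Import Defs.
From HB Require Import structures.
From mathcomp Require Import all_boot all_order all_algebra.
From Stdlib Require Import Reals Lra.
Set Implicit Arguments. Unset Strict Implicit. Unset Printing Implicit Defensive.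
Local Open Scope R_scope.

HB.instance Definition _ := Monoid.isComLaw.Build R 0 Rplus
  (fun x y z => esym (Rplus_assoc x y z)) Rplus_comm Rplus_0_l.

Lemma rsum_ge0 (T : finType) (P : pred T) (F : T -> R) :
  (forall t, P t -> 0 <= F t) -> 0 <= rsum P F.
Proof. by move=> F_ge0; rewrite /rsum; elim/big_ind: _ => //; [lra | move=> x y; lra]. Qed.

Lemma eq_rsum (T : finType) (P : pred T) (F G : T -> R) :
  (forall t, P t -> F t = G t) -> rsum P F = rsum P G.
Proof. by move=> eqFG; apply: eq_bigr. Qed.

Lemma eq_entropy (T : finType) (P : T -> R) (W1 W2 : finType)
    (X1 : W1 -> T -> nat) (X2 : W2 -> T -> nat) (S1 : {set W1}) (S2 : {set W2}) :
  (forall t t', [forall v in S1, X1 v t' == X1 v t] = [forall v in S2, X2 v t' == X2 v t]) ->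
  entropy P X1 S1 = entropy P X2 S2.
Proof. by move=> eqX; apply: eq_bigr => t _; do 3 f_equal; apply: eq_bigl => t'. Qed.

Section Pullback.
Variables (B C : mdcs) (sigma : {set V C} -> {set V B}).
Variables (P : vec B -> Prop) (Q : vec C -> Prop).
Hypothesis PQ : forall g, P g -> Q (fun S => g (sigma S)).

Lemma con_pullback h : con P h -> con Q (fun S => h (sigma S)).
Proof.
move=> [n [c [g [c_ge0 [Pg hg]]]]].
by exists n, c, (fun i S => g i (sigma S)); split=> //; split=> [i|S]; [apply: PQ | apply: hg].
Qed.

Lemma closure_pullback h : Defs.closure P h -> Defs.closure Q (fun S => h (sigma S)).
Proof.
move=> clh eps eps_gt0; have [g [Pg near_g]] := clh eps eps_gt0.
by exists (fun S => g (sigma S)); split; [apply: PQ | move=> S; apply: near_g].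
Qed.

End Pullback.

Lemma mem_Ysrc (B : mdcs) (v : V B) : (v \in Ysrc B) = (if v is inl _ then true else false).
Proof. by case: v => [k|x]; apply/imsetP; [exists k | case]. Qed.

Lemma mem_Ylev (B : mdcs) l (v : V B) :
  (v \in Ylev B l) = (if v is inl k then ltn k l else false).
Proof.
case: v => [k|x]; apply/imsetP => /=; last by case.
case: ifP => klt; first by exists k; rewrite ?inE.
by case=> k'; rewrite inE => k'lt [Ek]; rewrite -Ek klt in k'lt.
Qed.

Lemma mem_Ufan (B : mdcs) d (v : V B) :
  (v \in Ufan d) = (if v is inr x then edge x d else false).
Proof.
case: v => [k|x]; apply/imsetP => /=; first by case.
case: ifP => xd; first by exists x; rewrite ?inE.
by case=> x'; rewrite inE => x'd [Ex]; rewrite -Ex xd in x'd.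
Qed.

Lemma eq_inr (B : mdcs) (a b : Enc B) : ((inr a : V B) == inr b) = (a == b).
Proof. by apply/eqP/eqP => [[]|->]. Qed.

Section Contraction.
Variables (A : mdcs) (e : Enc A).
Local Notation A' := (contract A e).

Lemma enc_cases (x : Enc A) : x = e \/ exists x' : cEnc A e, x = val x'.
Proof. by case: (eqVneq x e) => [->|xe]; [left | right; exists (Sub x xe)]. Qed.

Lemma val_cEnc_eqF (x : cEnc A e) : (val x == e) = false.
Proof. by case: x => x /= /negPf. Qed.

Lemma e_val_cEnc_eqF (x : cEnc A e) : (e == val x) = false.
Proof. by rewrite eq_sym val_cEnc_eqF. Qed.

Lemma rsum_cEnc (p : pred (Enc A)) (f : Enc A -> R) :
  rsum p f = (if p e then f e else 0) + rsum (fun x : cEnc A e => p (val x)) (fun x => f (val x)).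
Proof.
rewrite /rsum big_mkcond (bigD1 e) //= [in RHS]big_mkcond; congr (_ + _).
rewrite (reindex_omap (val : cEnc A e -> Enc A) insub) => [|x xe]; last by rewrite insubT.
by apply: eq_bigl => x; rewrite val_cEnc_eqF valK eqxx.
Qed.

Definition extend_enc (T : Type) (f : cEnc A e -> T) (a : T) (x : Enc A) : T :=
  if insub x is Some x' then f x' else a.

Lemma extend_enc_val T f (a : T) x : extend_enc f a (val x) = f x.
Proof. by rewrite /extend_enc valK. Qed.

Lemma extend_enc_e T f (a : T) : extend_enc f a e = a.
Proof. by rewrite /extend_enc insubF // eqxx. Qed.

Definition inj_var (v : V A') : V A :=
  match v with inl k => inl k | inr x => inr (val x) end.

Lemma inj_var_inj : injective inj_var.
Proof. by case=> [k|x] [k'|x'] //= [E]; [rewrite E | congr inr; apply: val_inj]. Qed.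

(* The preimage of [S] under [inj_var], where U_e stands for all the sources. *)
Definition pull_set (S : {set V A}) : {set V A'} :=
  [set v | inj_var v \in S] :|: (if inr e \in S then Ysrc A' else set0).

Definition restrict (h : vec A) : vec A' := fun S => h (inj_var @: S).
Definition extend (h : vec A') : vec A := fun S => h (pull_set S).

Lemma mem_imset_inl k (S : {set V A'}) :
  ((inl k : V A) \in inj_var @: S) = ((inl k : V A') \in S).
Proof. exact: (mem_imset _ (inl k) inj_var_inj). Qed.

Lemma mem_imset_inr x (S : {set V A'}) :
  ((inr (val x) : V A) \in inj_var @: S) = ((inr x : V A') \in S).
Proof. exact: (mem_imset _ (inr x) inj_var_inj). Qed.

Lemma mem_imset_e (S : {set V A'}) : ((inr e : V A) \in inj_var @: S) = false.
Proof. by apply/imsetP => -[[k|[x xe]] _ //= [E]]; rewrite E eqxx in xe. Qed.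

Lemma mem_pull_inl k S :
  ((inl k : V A') \in pull_set S) = ((inl k : V A) \in S) || ((inr e : V A) \in S).
Proof. by rewrite !inE; case: ifP; rewrite ?mem_Ysrc ?inE ?orbT ?orbF. Qed.

Lemma mem_pull_inr x S : ((inr x : V A') \in pull_set S) = ((inr (val x) : V A) \in S).
Proof. by rewrite !inE; case: ifP; rewrite ?mem_Ysrc ?inE ?orbF. Qed.

Ltac mem_simpl := rewrite ?mem_imset_inl ?mem_imset_inr ?mem_imset_e ?mem_pull_inl
  ?mem_pull_inr ?inE ?eq_inr ?val_cEnc_eqF ?e_val_cEnc_eqF
  ?mem_Ysrc ?mem_Ylev ?mem_Ufan /= ?orbF ?orbT ?eqxx.
Ltac setA_ext := apply/setP; case=> [?|];
  last (let x := fresh "x" in move=> x; case: (enc_cases x) => [->|[? ->]]); mem_simpl.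
Ltac setA'_ext := apply/setP => -[?|?]; mem_simpl.

Lemma imset_Ysrc : inj_var @: Ysrc A' = Ysrc A.
Proof. by setA_ext. Qed.

Lemma imset_L2 x : inj_var @: ((inr x : V A') |: Ysrc A') = inr (val x) |: Ysrc A.
Proof. by setA_ext. Qed.

Lemma imset_Ufan (d : cDec A e) : inj_var @: Ufan (d : Dec A') = Ufan (val d).
Proof. by setA_ext => //; case: d => d /= /negPf ->. Qed.

Lemma imset_L5 l (d : cDec A e) :
  inj_var @: (Ylev A' l :|: Ufan (d : Dec A')) = Ylev A l :|: Ufan (val d).
Proof. by rewrite imsetU imset_Ufan; congr (_ :|: _); setA_ext. Qed.

Lemma pull_Ysrc : pull_set (Ysrc A) = Ysrc A'.
Proof. by setA'_ext. Qed.

Lemma pull_set1 v : pull_set [set inj_var v] = [set v].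
Proof. by case: v => ?; setA'_ext. Qed.

Lemma pull_set1e : pull_set [set inr e] = Ysrc A'.
Proof. by setA'_ext. Qed.

Lemma pull_L2 x : pull_set (inr (val x) |: Ysrc A) = (inr x : V A') |: Ysrc A'.
Proof. by setA'_ext. Qed.

Lemma pull_L2e : pull_set (inr e |: Ysrc A) = Ysrc A'.
Proof. by setA'_ext. Qed.

Lemma pull_Ufan d (ed : ~~ edge e d) :
  pull_set (Ufan d) = Ufan (exist (fun d => ~~ edge e d) d ed : Dec A').
Proof. by setA'_ext => //; rewrite (negPf ed). Qed.

Lemma pull_L5 l d (ed : ~~ edge e d) :
  pull_set (Ylev A l :|: Ufan d) = Ylev A' l :|: Ufan (exist (fun d => ~~ edge e d) d ed : Dec A').
Proof. by setA'_ext => //; rewrite (negPf ed) ?orbF. Qed.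

Lemma pull_L5e l d : edge e d -> pull_set (Ylev A l :|: Ufan d) = pull_set (Ufan d).
Proof. by move=> ed; setA'_ext => //; rewrite ed ?orbT. Qed.

Lemma L1_restrict h : L1 h -> L1 (restrict h).
Proof.
case=> h_ge0 Yh; split=> [S|]; first exact: h_ge0.
by rewrite /restrict imset_Ysrc Yh; apply: eq_rsum => k _; rewrite imset_set1.
Qed.

Lemma L2_restrict h : L2 h -> L2 (restrict h).
Proof. by case=> h_ge0 Uh; split=> [S|x]; [apply: h_ge0 | rewrite /restrict imset_L2 imset_Ysrc]. Qed.

Lemma L5_restrict h : L5 h -> L5 (restrict h).
Proof. by case=> h_ge0 Dh; split=> [S|d]; [apply: h_ge0 | rewrite /restrict imset_L5 imset_Ufan; apply: Dh]. Qed.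

Lemma L125_restrict h : L125 h -> L125 (restrict h).
Proof. by case=> [? [? ?]]; split; [apply: L1_restrict | split; [apply: L2_restrict | apply: L5_restrict]]. Qed.

Lemma L4_restrict h Rt Rt' : (forall x, Rt (val x) = Rt' x) -> L4 h Rt -> L4 (restrict h) Rt'.
Proof.
move=> RtRt' [h_ge0 [Rt_ge0 hRt]]; split=> [S|]; first exact: h_ge0.
by split=> x; rewrite -RtRt'; [apply: Rt_ge0 | rewrite /restrict imset_set1; apply: hRt].
Qed.

Lemma L1_extend h : L1 h -> L1 (extend h).
Proof.
case=> h_ge0 Yh; split=> [S|]; first exact: h_ge0.
by rewrite /extend pull_Ysrc Yh; apply: eq_rsum => k _; rewrite (pull_set1 (inl k)).
Qed.

Lemma L2_extend h : L2 h -> L2 (extend h).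
Proof.
case=> h_ge0 Uh; split=> [S|x]; first exact: h_ge0.
rewrite /extend; case: (enc_cases x) => [->|[x' ->]]; last by rewrite pull_L2 pull_Ysrc.
by rewrite pull_L2e pull_Ysrc; lra.
Qed.

Lemma L5_extend h : L5 h -> L5 (extend h).
Proof.
case=> h_ge0 Dh; split=> [S|d]; first exact: h_ge0.
rewrite /extend; case: (boolP (edge e d)) => ed; first by rewrite (pull_L5e _ ed); lra.
by rewrite (pull_L5 _ ed) (pull_Ufan ed); exact: (Dh (exist _ d ed)).
Qed.

Lemma L125_extend h : L125 h -> L125 (extend h).
Proof. by case=> [? [? ?]]; split; [apply: L1_extend | split; [apply: L2_extend | apply: L5_extend]]. Qed.

Lemma L4_extend h Rt : L4 h Rt -> L4 (extend h) (extend_enc Rt (h (Ysrc A'))).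
Proof.
case=> h_ge0 [Rt_ge0 hRt]; split=> [S|]; first exact: h_ge0.
split=> x; first by case: (enc_cases x) => [->|[x' ->]]; rewrite ?extend_enc_e ?extend_enc_val.
rewrite /extend; case: (enc_cases x) => [->|[x' ->]].
  by rewrite extend_enc_e pull_set1e; lra.
by rewrite extend_enc_val (pull_set1 (inr x')); apply: hRt.
Qed.

Lemma entropic_restrict h : entropic h -> entropic (restrict h).
Proof.
move=> [T [P [X [P_ge0 [P1 hX]]]]]; exists T, P, (fun v => X (inj_var v)).
split=> //; split=> // S; rewrite /restrict hX; apply: eq_entropy => t t'.
apply/forallP/forallP => eqX v; apply/implyP => Sv.
  by have := eqX (inj_var v); rewrite imset_f.
by case/imsetP: Sv => v' Sv' ->; have := eqX v'; rewrite Sv'.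
Qed.

Lemma entropic_extend h : entropic h -> entropic (extend h).
Proof.
move=> [T [P [X [P_ge0 [P1 hX]]]]].
pose src t : {ffun 'I_(K A) -> nat} := [ffun k => X (inl k) t].
(* U_e is the source tuple, coded as a nat by its position in a fixed list. *)
pose code t := index (src t) (map src (enum T)).
have eq_code t t' : (code t' == code t) = (src t' == src t).
  apply/eqP/eqP => E; last by rewrite /code E.
  by have := congr1 (nth (src t) (map src (enum T))) E; rewrite !nth_index // map_f ?mem_enum.
pose Y (v : V A) t := match v with inl k => X (inl k) t
                      | inr x => extend_enc (fun x' => X (inr x') t) (code t) x end.
exists T, P, Y; split=> //; split=> // S; rewrite /extend hX; apply: eq_entropy => t t'.
apply/forallP/forallP => eqX.
- case=> [k|x]; apply/implyP.
    by move=> Sk; have := eqX (inl k); rewrite mem_pull_inl Sk.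
  case: (enc_cases x) => [->|[x' ->]] Sx /=; rewrite ?extend_enc_e ?extend_enc_val.
    rewrite eq_code; apply/eqP/ffunP => k; rewrite !ffunE.
    by have := eqX (inl k); rewrite mem_pull_inl Sx orbT => /eqP.
  by have := eqX (inr x'); rewrite mem_pull_inr Sx.
- case=> [k|x']; apply/implyP; rewrite ?mem_pull_inl ?mem_pull_inr; last first.
    by move=> Sx; have := eqX (inr (val x')); rewrite Sx /= !extend_enc_val.
  case/orP => [Sk|Se]; first by have := eqX (inl k); rewrite Sk.
  have := eqX (inr e); rewrite Se /= !extend_enc_e eq_code => /eqP /ffunP /(_ k).
  by rewrite !ffunE => ->.
Qed.

Lemma entropic_cone_restrict h :
  Defs.closure (con (fun g => entropic g /\ L1 g /\ L2 g)) h ->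
  Defs.closure (con (fun g => entropic g /\ L1 g /\ L2 g)) (restrict h).
Proof.
apply: closure_pullback => g; apply: con_pullback => g' [? [? ?]].
by split; [apply: entropic_restrict | split; [apply: L1_restrict | apply: L2_restrict]].
Qed.

Lemma entropic_cone_extend h :
  Defs.closure (con (fun g => entropic g /\ L1 g /\ L2 g)) h ->
  Defs.closure (con (fun g => entropic g /\ L1 g /\ L2 g)) (extend h).
Proof.
apply: closure_pullback => g; apply: con_pullback => g' [? [? ?]].
by split; [apply: entropic_extend | split; [apply: L1_extend | apply: L2_extend]].
Qed.

Lemma subsp_restrict (F : finFieldType) h : subsp_vec F h -> subsp_vec F (restrict h).
Proof.
move=> [d [W hW]]; exists d, (fun v => W (inj_var v)) => S.
by rewrite /restrict hW big_imset // => x y _ _; apply: inj_var_inj.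
Qed.

Lemma subsp_extend (F : finFieldType) h : subsp_vec F h -> subsp_vec F (extend h).
Proof.
move=> [d [W hW]].
pose Wsrc := (\sum_(k : 'I_(K A)) W (inl k))%MS.
exists d, (fun v => match v with inl k => W (inl k)
                     | inr x => extend_enc (fun x' => W (inr x')) Wsrc x end) => S.
rewrite /extend hW; congr INR; apply: eqmx_rank; apply/andP; split.
- apply/sumsmx_subP => -[k|x']; rewrite ?mem_pull_inl ?mem_pull_inr; last first.
    by move=> Sx; apply: (sumsmx_sup (inr (val x'))); rewrite ?extend_enc_val.
  case/orP => [Sk|Se]; first exact: (sumsmx_sup (inl k)).
  by apply: (sumsmx_sup (inr e)); rewrite ?extend_enc_e //; apply: (sumsmx_sup k).
- apply/sumsmx_subP => -[k Sk|x]; first by apply: (sumsmx_sup (inl k)); rewrite ?mem_pull_inl ?Sk.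
  case: (enc_cases x) => [->|[x' ->]] Sx; rewrite ?extend_enc_e ?extend_enc_val.
    by apply/sumsmx_subP => k _; apply: (sumsmx_sup (inl k)); rewrite ?mem_pull_inl ?Sx ?orbT.
  by apply: (sumsmx_sup (inr x')); rewrite ?mem_pull_inr.
Qed.

Section ScalarLinear.
Local Open Scope ring_scope.
Import GRing.Theory.
Variable F : finFieldType.

Definition col_var (j : 'I_#|V A'|) : 'I_#|V A| := enum_rank (inj_var (enum_val j)).

Lemma col_var_inj : injective col_var.
Proof. by move=> j j' /enum_rank_inj /inj_var_inj /enum_val_inj. Qed.

Lemma colrestr_colsub m (M : 'M[F]_(m, #|V A|)) (S : {set V A'}) :
  colrestr (colsub col_var M) S = colrestr M (inj_var @: S) *m colsub col_var 1%:M.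
Proof.
rewrite mulmx_colsub mulmx1; apply/matrixP => i j.
by rewrite !mxE enum_rankK (mem_imset _ _ inj_var_inj).
Qed.

(* Column [inr e] of the left-hand side vanishes; the other columns are those of [colsub]. *)
Lemma colrestr_imset m (M : 'M[F]_(m, #|V A|)) (S : {set V A'}) :
  colrestr M (inj_var @: S) = colrestr (colsub col_var M) S *m (colsub col_var 1%:M)^T.
Proof.
apply/matrixP => i j; rewrite !mxE.
have [j_e|[v j_v]] : enum_val j = inr e \/ exists v, enum_val j = inj_var v.
- case: (enum_val j) => [k|x]; first by right; exists (inl k).
  by case: (enc_cases x) => [->|[x' ->]]; [left | right; exists (inr x')].
- rewrite j_e mem_imset_e big1 // => j' _; rewrite !mxE.
  have [Ej|] := eqVneq j (col_var j'); last by rewrite mulr0.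
  by move: j_e; rewrite Ej enum_rankK; case: (enum_val j') => // x [/eqP]; rewrite val_cEnc_eqF.
have Ej : j = col_var (enum_rank v) by rewrite /col_var enum_rankK -j_v enum_valK.
rewrite j_v (mem_imset _ _ inj_var_inj) (bigD1 (enum_rank v)) //= big1 => [|j' j'v].
  by rewrite !mxE enum_rankK -Ej eqxx mulr1 addr0.
by rewrite !mxE Ej (inj_eq col_var_inj) eq_sym (negPf j'v) mulr0.
Qed.

Lemma rank_restrict h : rank_vec F h -> rank_vec F (restrict h).
Proof.
move=> [m [M hM]]; exists m, (colsub col_var M) => S.
rewrite /restrict hM; congr INR; apply/eqP; rewrite eqn_leq.
by rewrite {1}colrestr_imset colrestr_colsub !mxrankM_maxl.
Qed.

End ScalarLinear.

Lemma projc_restrict (P : vec A -> Prop) (P' : vec A' -> Prop) :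
  (forall h, P h -> P' (restrict h)) ->
  forall Hs Rt', projc A e (proj_region P) Hs Rt' -> proj_region P' Hs Rt'.
Proof.
move=> PP' Hs Rt' [Rt [[h [Ph [hRt Hsh]]] RtRt']].
exists (restrict h); split; first exact: PP'.
split; [exact: L4_restrict RtRt' hRt | by move=> k; rewrite Hsh /restrict imset_set1].
Qed.

Lemma projc_extend (P : vec A -> Prop) (P' : vec A' -> Prop) :
  (forall h, P' h -> P (extend h)) ->
  forall Hs Rt', proj_region P' Hs Rt' -> projc A e (proj_region P) Hs Rt'.
Proof.
move=> P'P Hs Rt' [h [P'h [hRt Hsh]]].
exists (extend_enc Rt' (h (Ysrc A'))); split=> [|x]; last exact: extend_enc_val.
exists (extend h); split; first exact: P'P.
split; [exact: L4_extend | by move=> k; rewrite Hsh /extend (pull_set1 (inl k))].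
Qed.

Lemma Rreg_contract Hs Rt : Rreg A' Hs Rt <-> projc A e (Rreg A) Hs Rt.
Proof.
split; [apply: projc_extend | apply: projc_restrict] => h [cone_h L5h].
  by split; [apply: entropic_cone_extend | apply: L5_extend].
by split; [apply: entropic_cone_restrict | apply: L5_restrict].
Qed.

Lemma Rq_contract (F : finFieldType) Hs Rt : Rq F A' Hs Rt <-> projc A e (Rq F A) Hs Rt.
Proof.
split; [apply: projc_extend | apply: projc_restrict] => h [Gh L125h].
  by split; [apply: con_pullback Gh => g; apply: subsp_extend | apply: L125_extend].
by split; [apply: con_pullback Gh => g; apply: subsp_restrict | apply: L125_restrict].
Qed.

Lemma Rsq_contract (F : finFieldType) Hs Rt : projc A e (Rsq F A) Hs Rt -> Rsq F A' Hs Rt.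
Proof.
apply: projc_restrict => h [Gh L125h].
by split; [apply: con_pullback Gh => g; apply: rank_restrict | apply: L125_restrict].
Qed.

Lemma Rsp_extend Hs Rt' : Rsp A' Hs Rt' -> projc A e (Rsp A) Hs Rt'.
Proof.
move=> [r' [r'_ge0 [Hs_ge0 [Rt'_ge0 [Rt'r' decode]]]]].
exists (extend_enc Rt' (rsum predT Hs)); split=> [|x]; last exact: extend_enc_val.
exists (extend_enc r' Hs); do !split=> //.
- by move=> x k; case: (enc_cases x) => [->|[x' ->]]; rewrite ?extend_enc_e ?extend_enc_val.
- move=> x; case: (enc_cases x) => [->|[x' ->]]; rewrite ?extend_enc_e ?extend_enc_val //.
  exact: rsum_ge0.
- by move=> x; case: (enc_cases x) => [->|[x' ->]]; rewrite ?extend_enc_e ?extend_enc_val.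
move=> d i lti; rewrite rsum_cEnc extend_enc_e.
rewrite (@eq_rsum _ _ _ (fun x => r' x i)) => [|x _]; last by rewrite extend_enc_val.
case: (boolP (edge e d)) => ed; last first.
  by have := decode (exist _ d ed) i lti; rewrite /=; lra.
apply: Rle_ge; rewrite -{1}[Hs i]Rplus_0_r; apply: Rplus_le_compat_l.
by apply: rsum_ge0 => x _; apply: r'_ge0.
Qed.

Lemma Rsp_restrict Hs Rt' : projc A e (Rsp A) Hs Rt' -> Rsp A' Hs Rt'.
Proof.
move=> [Rt [[r [r_ge0 [Hs_ge0 [Rt_ge0 [Rtr decode]]]]] RtRt']].
exists (fun x => r (val x)); do 2!split=> //.
split=> [x|]; first by rewrite -RtRt'.
split=> [x|[d ed] i lti]; first by rewrite -RtRt'.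
by have := decode d i lti; rewrite rsum_cEnc (negPf ed) /=; lra.
Qed.

End Contraction.

Unset Implicit Arguments.
Theorem theorem5 (A : mdcs) (e : Enc A) :
  (forall Hs Rt, Rreg (contract A e) Hs Rt <-> projc A e (Rreg A) Hs Rt) /\
  (forall (F : finFieldType) Hs Rt,
      Rq F (contract A e) Hs Rt <-> projc A e (Rq F A) Hs Rt) /\
  (forall (F : finFieldType) Hs Rt,
      projc A e (Rsq F A) Hs Rt -> Rsq F (contract A e) Hs Rt) /\
  (forall Hs Rt, Rsp (contract A e) Hs Rt <-> projc A e (Rsp A) Hs Rt).
Proof.
split; first exact: Rreg_contract.
split; first exact: Rq_contract.
split; first exact: Rsq_contract.
by move=> Hs Rt; split; [apply: Rsp_extend | apply: Rsp_restrict].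
Qed.
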